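(* Let $T,P,S$ be real constants and consider, on $\{(x_3,y_4): 0<x_3<1,\ 0<y_4<1\}$, the system $$\dot x_3=x_3\bigl((T-2P+S)-(T-S)y_4\bigr)\,\frac{y_4(1-x_3)}{(1+y_4-x_3+y_4x_3)^2},\qquad \dot y_4=(1-y_4)\bigl((T-P)x_3-(P-S)\bigr)\,\frac{y_4(1-x_3)}{(1+y_4-x_3+y_4x_3)^2}.$$ Then the function $$H(x_3,y_4)=-(P-S)\bigl(\log x_3+2\log(1-y_4)\bigr)+(T-P)x_3-(T-S)y_4$$ is constant along every solution of this system.
   Context: This system describes the reduced learning dynamics in the exploitative regime of the prisoner's dilemma with payoffs $T>R>P>S$, where $x_3$ is the exploiting player's probability of cooperating after outcome DC and $y_4$ the exploited player's probability of cooperating after outcome DD. *)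

From Stdlib Require Import Reals.
Open Scope R_scope.

Definition common_factor (x3 y4 : R) : R :=
  y4 * (1 - x3) / (1 + y4 - x3 + y4 * x3) ^ 2.

Definition F_x3 (T P S x3 y4 : R) : R :=
  x3 * ((T - 2 * P + S) - (T - S) * y4) * common_factor x3 y4.

Definition F_y4 (T P S x3 y4 : R) : R :=
  (1 - y4) * ((T - P) * x3 - (P - S)) * common_factor x3 y4.

Definition H (T P S x3 y4 : R) : R :=
  - (P - S) * (ln x3 + 2 * ln (1 - y4)) + (T - P) * x3 - (T - S) * y4.

Definition is_interval (I : R -> Prop) : Prop :=
  forall s t u, I s -> I t -> s <= u <= t -> I u.

(* Writing A := (T - 2P + S) - (T - S) y4 and B := (T - P) x3 - (P - S), the
   partial derivatives of H satisfy x3 dH/dx3 = B and (1 - y4) dH/dy4 = -A,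
   while the field is (x3 A, (1 - y4) B) times the common factor.  Hence the
   derivative of H along the flow is (B A - A B) times that factor, i.e. zero,
   and a function with zero derivative on an interval is constant. *)

From Stdlib Require Import Reals Lra.
Open Scope R_scope.

Lemma derivable_pt_lim_0_const_on_interval (f : R -> R) (I : R -> Prop) :
  is_interval I -> (forall t, I t -> derivable_pt_lim f t 0) ->
  forall s t, I s -> I t -> f s = f t.
Proof.
  intros hI df.
  assert (lt_case : forall s t, I s -> I t -> s < t -> f s = f t).
  { intros s t hs ht hst.
    destruct (MVT_cor2 f (fun _ => 0) s t hst) as [c [hc _]].
    - intros c hc; apply df, (hI s t c); assumption.
    - lra. }
  intros s t hs ht.
  destruct (Rtotal_order s t) as [h | [-> | h]].
  - now apply lt_case.
  - reflexivity.
  - symmetry; now apply lt_case.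
Qed.

Lemma derivable_pt_lim_ln_comp (g : R -> R) (c a : R) :
  0 < g c -> derivable_pt_lim g c a ->
  derivable_pt_lim (fun t => ln (g t)) c (a / g c).
Proof.
  intros hg dg.
  replace (a / g c) with (/ g c * a) by (unfold Rdiv; ring).
  apply (derivable_pt_lim_comp g ln); [exact dg | now apply derivable_pt_lim_ln].
Qed.

Definition dH_dx3 (T P S x3 : R) : R := - (P - S) / x3 + (T - P).

Definition dH_dy4 (T P S y4 : R) : R := 2 * (P - S) / (1 - y4) - (T - S).

Lemma derivable_pt_lim_H_comp (T P S : R) (x3 y4 : R -> R) (c a b : R) :
  0 < x3 c -> y4 c < 1 ->
  derivable_pt_lim x3 c a -> derivable_pt_lim y4 c b ->
  derivable_pt_lim (fun t => H T P S (x3 t) (y4 t)) c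
    (dH_dx3 T P S (x3 c) * a + dH_dy4 T P S (y4 c) * b).
Proof.
  intros hx hy da db.
  assert (d1y : derivable_pt_lim (fun t => 1 - y4 t) c (0 - b)).
  { apply (derivable_pt_lim_minus (fun _ => 1) y4);
      [apply derivable_pt_lim_const | exact db]. }
  assert (dlog : derivable_pt_lim (fun t => ln (x3 t) + 2 * ln (1 - y4 t)) c
                   (a / x3 c + 2 * ((0 - b) / (1 - y4 c)))).
  { apply (derivable_pt_lim_plus (fun t => ln (x3 t)) (fun t => 2 * ln (1 - y4 t))).
    - now apply (derivable_pt_lim_ln_comp x3).
    - apply (derivable_pt_lim_scal (fun t => ln (1 - y4 t))).
      apply (derivable_pt_lim_ln_comp (fun t => 1 - y4 t)); [lra | exact d1y]. }
  replace (dH_dx3 T P S (x3 c) * a + dH_dy4 T P S (y4 c) * b)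
    with (- (P - S) * (a / x3 c + 2 * ((0 - b) / (1 - y4 c)))
          + (T - P) * a - (T - S) * b)
    by (unfold dH_dx3, dH_dy4; field; lra).
  unfold H.
  apply (derivable_pt_lim_minus
    (fun t => - (P - S) * (ln (x3 t) + 2 * ln (1 - y4 t)) + (T - P) * x3 t)
    (fun t => (T - S) * y4 t));
    [| now apply derivable_pt_lim_scal].
  apply (derivable_pt_lim_plus
    (fun t => - (P - S) * (ln (x3 t) + 2 * ln (1 - y4 t)))
    (fun t => (T - P) * x3 t));
    [| now apply derivable_pt_lim_scal].
  now apply (derivable_pt_lim_scal (fun t => ln (x3 t) + 2 * ln (1 - y4 t))).
Qed.

Lemma H_gradient_orthogonal_to_field (T P S x3 y4 : R) :
  x3 <> 0 -> y4 <> 1 ->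
  dH_dx3 T P S x3 * F_x3 T P S x3 y4 + dH_dy4 T P S y4 * F_y4 T P S x3 y4 = 0.
Proof.
  intros hx hy.
  unfold dH_dx3, dH_dy4, F_x3, F_y4.
  field; split; [lra | exact hx].
Qed.

Theorem mainTheorem2 (T P S : R) (I : R -> Prop) (x3 y4 : R -> R) :
  is_interval I ->
  (forall t, I t -> 0 < x3 t < 1 /\ 0 < y4 t < 1) ->
  (forall t, I t -> derivable_pt_lim x3 t (F_x3 T P S (x3 t) (y4 t))) ->
  (forall t, I t -> derivable_pt_lim y4 t (F_y4 T P S (x3 t) (y4 t))) ->
  forall s t, I s -> I t -> H T P S (x3 s) (y4 s) = H T P S (x3 t) (y4 t).
Proof.
  intros hI hbox dx dy.
  apply (derivable_pt_lim_0_const_on_interval (fun t => H T P S (x3 t) (y4 t)) I hI).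
  intros t ht.
  destruct (hbox t ht) as [hx hy].
  rewrite <- (H_gradient_orthogonal_to_field T P S (x3 t) (y4 t)) by lra.
  apply derivable_pt_lim_H_comp; auto; lra.
Qed.
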